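(* Let $c\ge1$, $\lambda_1,\lambda_2,\mu_1,\mu_2>0$, let $X$ be the Markov chain described in the context with $X(0)=(0,0)$, fix $\alpha$ with $\mathrm{Re}\,\alpha>0$, and let $\{v_{i,j}\}_{i\ge j\ge0}$ be defined recursively by $v_{0,0}=\pi_{(0,c-1)}(\alpha)$ and, for $i\ge0$, $v_{i+1,0}=\pi_{(i+1,c-1)}(\alpha)$, $v_{i+1,j}=R_1\bigl(v_{i,j-1}+R_2\sum_{k=j}^{i}v_{i,k}\bigr)$ for $1\le j\le i+1$. Then for all $i\ge j\ge0$, $$v_{i,j}=R_1^{\,j}\pi_{(i-j,c-1)}(\alpha)+\sum_{k=j+1}^{i}R_1^{\,k}\pi_{(i-k,c-1)}(\alpha)\sum_{l=1}^{k-j}\frac{j}{k-j}\binom{k-j}{l}\binom{k-1}{l-1}R_2^{\,l}.$$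
   Context: The Markov chain $X=\{(X_1(t),X_2(t))\}_{t\ge0}$ on $\mathbb{N}_0^2$ has as its only nonzero off-diagonal transition rates: $q((i,j),(i+1,j))=\lambda_1$ ($i,j\ge0$); $q((i,j),(i,j+1))=\lambda_2$ ($i,j\ge0$); $q((i,j),(i-1,j))=\max(\min(i,c-j),0)\mu_1$ ($i\ge1$, $j\ge0$); $q((i,j),(i,j-1))=\min(c,j)\mu_2$ ($i\ge0$, $j\ge1$). For $x\in\mathbb{N}_0^2$, $p_x(t)=P(X(t)=x\mid X(0)=(0,0))$ and $\pi_x(\alpha)=\int_0^\infty e^{-\alpha t}p_x(t)\,dt$. For $\lambda,\mu>0$, $\phi_{\lambda,\mu}(s)=\frac{\lambda+\mu+s-\sqrt{(\lambda+\mu+s)^2-4\lambda\mu}}{2\lambda}$ is the Laplace–Stieltjes transform of the busy period of an $M/M/1$ queue (arrival rate $\lambda$, service rate $\mu$) started by one customer. Set $\rho_2=\lambda_2/(c\mu_2)$, $\phi_2=\phi_{\lambda_2,c\mu_2}(\lambda_1+\alpha)$, $r_2=\rho_2\phi_2$, $\Omega_2=\frac{\rho_2\phi_2}{\lambda_2(1-\rho_2\phi_2^2)}$, $R_1=\frac{\lambda_1\Omega_2}{1-r_2\phi_2}$, $R_2=r_2\phi_2$. Empty sums are zero. *)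

From Stdlib Require Import Reals Lra Lia Arith Factorial Binomial.
From Coquelicot Require Import Coquelicot.
Open Scope R_scope.

Definition state := (nat * nat)%type.

(* Nonzero off-diagonal transition rates q((i,j), .) of the chain. *)
Definition rate_up1 (l1 : R) : R := l1.                       (* (i,j)->(i+1,j) *)
Definition rate_up2 (l2 : R) : R := l2.                       (* (i,j)->(i,j+1) *)
Definition rate_down1 (c : nat) (m1 : R) (i j : nat) : R :=    (* (i,j)->(i-1,j), i>=1 *)
  Rmax (IZR (Z.min (Z.of_nat i) (Z.of_nat c - Z.of_nat j))) 0 * m1.
Definition rate_down2 (c : nat) (m2 : R) (j : nat) : R :=      (* (i,j)->(i,j-1), j>=1 *)
  INR (Nat.min c j) * m2.

Definition out_rate (c : nat) (l1 l2 m1 m2 : R) (i j : nat) : R :=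
  l1 + l2 + (if Nat.eqb i 0 then 0 else rate_down1 c m1 i j)
          + (if Nat.eqb j 0 then 0 else rate_down2 c m2 j).

(* Uniformization constant: a uniform bound on all outflow rates. *)
Definition unif (c : nat) (l1 l2 m1 m2 : R) : R := l1 + l2 + INR c * (m1 + m2).

(* Distribution after n steps of the uniformized jump chain
   P = I + Q / unif, started at (0,0).  Only the (finitely many)
   predecessors of y contribute. *)
Fixpoint jump_dist (c : nat) (l1 l2 m1 m2 : R) (n : nat) (y : state) : R :=
  let q := unif c l1 l2 m1 m2 in
  let (i, j) := y in
  match n with
  | O => if (Nat.eqb i 0 && Nat.eqb j 0)%bool then 1 else 0
  | S n' =>
      let p := jump_dist c l1 l2 m1 m2 n' in
      p (i, j) * (1 - out_rate c l1 l2 m1 m2 i j / q)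
      + (match i with O => 0 | S i' => p (i', j) * (l1 / q) end)
      + (match j with O => 0 | S j' => p (i, j') * (l2 / q) end)
      + p (S i, j) * (rate_down1 c m1 (S i) j / q)
      + p (i, S j) * (rate_down2 c m2 (S j) / q)
  end.

(* Transition probability p_x(t) = P(X(t) = x | X(0) = (0,0)), via
   uniformization (valid since all rates are bounded by unif). *)
Definition trans_prob (c : nat) (l1 l2 m1 m2 : R) (x : state) (t : R) : R :=
  let q := unif c l1 l2 m1 m2 in
  Series (fun n => exp (- (q * t)) * (q * t) ^ n / INR (fact n)
                   * jump_dist c l1 l2 m1 m2 n x).

Definition Cexp (z : C) : C :=
  (exp (Re z) * cos (Im z), exp (Re z) * sin (Im z)).

(* Principal complex square root (Re >= 0). *)
Definition Csqrt (z : C) : C :=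
  (sqrt ((Cmod z + Re z) / 2),
   (if Rlt_dec (Im z) 0 then -1 else 1) * sqrt ((Cmod z - Re z) / 2)).

(* phi_{lambda,mu}(s): LST of the M/M/1 busy period. *)
Definition phi (lam mu : R) (s : C) : C :=
  let b := (RtoC (lam + mu) + s)%C in
  ((b - Csqrt (b * b - RtoC (4 * lam * mu))) / RtoC (2 * lam))%C.

Section Consts.
Variables (c : nat) (l1 l2 m1 m2 : R) (alpha : C).
Definition rho2 : R := l2 / (INR c * m2).
Definition phi2 : C := phi l2 (INR c * m2) (RtoC l1 + alpha)%C.
Definition r2 : C := (RtoC rho2 * phi2)%C.
Definition Omega2 : C :=
  (RtoC rho2 * phi2 / (RtoC l2 * (1 - RtoC rho2 * phi2 * phi2)))%C.
Definition RR1 : C := (RtoC l1 * Omega2 / (1 - r2 * phi2))%C.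
Definition RR2 : C := (r2 * phi2)%C.
End Consts.

Fixpoint binom (n k : nat) : nat :=
  match n, k with
  | _, O => 1%nat
  | O, S _ => 0%nat
  | S n', S k' => (binom n' k' + binom n' k)%nat
  end.
Definition binR (n k : nat) : R := INR (binom n k).

From Stdlib Require Import Reals Lra Lia Arith.
From Coquelicot Require Import Coquelicot.
Open Scope R_scope.

(* Unrolling the recursion, [v i j = sum_k R1^k pi_(i-k) c_(j,k)(R2)] for polynomials
   [c_(j,k)] independent of [i], determined by [c_(j,j) = 1], [c_(j,k) = 0] for [k < j],
   [c_(0,k) = 0] for [k > 0] and [c_(j,k+1) = c_(j-1,k) + R2 * sum_(j' >= j) c_(j',k)].
   The closed form says that [c_(j,k)] has coefficients
   [j/(k-j) * binom(k-j,l) * binom(k-1,l-1)].  Comparing coefficients of [R2^(l+1)],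
   the recursion becomes a column sum over [j'] of these coefficients, and a four-term
   identity between binomial products makes that sum telescope. *)

Lemma sum_n_m_zero_loc {G : AbelianMonoid} (f : nat -> G) n m :
  (forall k, (n <= k <= m)%nat -> f k = zero) -> sum_n_m f n m = zero.
Proof.
  intro Hf. rewrite (sum_n_m_ext_loc _ (fun _ => zero)) by exact Hf.
  apply sum_n_m_const_zero.
Qed.

Lemma sum_n_m_swap {G : AbelianMonoid} (f : nat -> nat -> G) a b c d :
  sum_n_m (fun i => sum_n_m (fun j => f i j) a b) c d =
  sum_n_m (fun j => sum_n_m (fun i => f i j) c d) a b.
Proof.
  induction d as [|d IH].
  - destruct c as [|c].
    + rewrite sum_n_n. apply sum_n_m_ext; intro j. now rewrite sum_n_n.
    + rewrite sum_n_m_zero by lia. symmetry. apply sum_n_m_zero_loc.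
      intros j _. apply sum_n_m_zero; lia.
  - destruct (le_lt_dec c (S d)) as [Hc|Hc].
    + rewrite sum_n_Sm, IH, <- sum_n_m_plus by lia.
      apply sum_n_m_ext; intro j. now rewrite sum_n_Sm.
    + rewrite sum_n_m_zero by lia. symmetry. apply sum_n_m_zero_loc.
      intros j _. apply sum_n_m_zero; lia.
Qed.

Lemma sum_n_m_telescope {G : AbelianGroup} (g : nat -> G) j i :
  (j <= S i)%nat ->
  sum_n_m (fun k => minus (g k) (g (S k))) j i = minus (g j) (g (S i)).
Proof.
  revert j; induction i as [|i IH]; intros j Hj.
  - destruct j as [|j].
    + now rewrite sum_n_n.
    + replace j with 0%nat by lia. rewrite sum_n_m_zero by lia.
      now rewrite minus_eq_zero.
  - destruct (Nat.eq_dec j (S (S i))) as [->|Hj'].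
    + rewrite sum_n_m_zero by lia. now rewrite minus_eq_zero.
    + rewrite sum_n_Sm, IH by lia. symmetry. apply minus_trans.
Qed.

Lemma binom_0_r n : binom n 0 = 1%nat.
Proof. now destruct n. Qed.

Lemma binom_small n k : (n < k)%nat -> binom n k = 0%nat.
Proof.
  revert k; induction n as [|n IH]; intros [|k] Hk; simpl; try lia.
  rewrite !IH; lia.
Qed.

Lemma binom_1_r n : binom n 1 = n.
Proof. induction n as [|n IH]; simpl; [easy|]. rewrite binom_0_r, IH; lia. Qed.

Lemma binR_0_r n : binR n 0 = 1.
Proof. unfold binR; now rewrite binom_0_r. Qed.

Lemma binR_1_r n : binR n 1 = INR n.
Proof. unfold binR; now rewrite binom_1_r. Qed.

Lemma binR_small n k : (n < k)%nat -> binR n k = 0.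
Proof. intro Hk; unfold binR; now rewrite binom_small. Qed.

Lemma binR_succ n k : binR (S n) (S k) = binR n k + binR n (S k).
Proof. unfold binR; simpl binom; apply plus_INR. Qed.

Lemma binR_eq_C n k : (k <= n)%nat -> binR n k = Binomial.C n k.
Proof.
  revert k; induction n as [|n IH]; intros [|k] Hk; try lia.
  - unfold Binomial.C; simpl; rewrite binR_0_r; field.
  - unfold Binomial.C; rewrite binR_0_r, Nat.sub_0_r; simpl (fact 0); simpl (INR 1).
    field; apply INR_fact_neq_0.
  - rewrite binR_succ. destruct (Nat.eq_dec k n) as [->|Hkn].
    + rewrite (binR_small n (S n)), IH by lia. unfold Binomial.C.
      rewrite !Nat.sub_diag; simpl (fact 0); simpl (INR 1).
      field; split; apply INR_fact_neq_0.
    + rewrite !IH by lia. apply Binomial.pascal; lia.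
Qed.

Lemma binR_absorb n k : binR (S n) (S k) = binR n k * INR (S n) / INR (S k).
Proof.
  destruct (le_lt_dec k n) as [Hk|Hk].
  - rewrite !binR_eq_C by lia. unfold Binomial.C.
    replace (S n - S k)%nat with (n - k)%nat by lia.
    change (fact (S n)) with (S n * fact n)%nat.
    change (fact (S k)) with (S k * fact k)%nat.
    rewrite !mult_INR. field.
    repeat split; try apply INR_fact_neq_0; apply not_0_INR; lia.
  - rewrite !binR_small by lia. lra.
Qed.

Lemma binR_succ_r n k : binR n (S k) = binR n k * (INR n - INR k) / INR (S k).
Proof.
  assert (Hk : INR (S k) <> 0) by (apply not_0_INR; lia).
  apply (Rplus_eq_reg_l (binR n k)).
  rewrite <- binR_succ, binR_absorb, !S_INR in *. field; exact Hk.
Qed.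

(* For [j < k] it is the summand of the closed form, which is used only for
   [l >= 1]: at [l = 0] the formula would give [j/(k-j)] instead of [0]. *)
Definition coef (j k l : nat) : R :=
  match Nat.compare k j with
  | Lt => 0
  | Eq => match l with O => 1 | S _ => 0 end
  | Gt => match l with
          | O => 0
          | S l' => INR j / INR (k - j) * binR (k - j) l * binR (k - 1) l'
          end
  end.

Lemma coef_lt j k l : (k < j)%nat -> coef j k l = 0.
Proof. intro Hk; unfold coef; now rewrite (proj2 (Nat.compare_lt_iff _ _) Hk). Qed.

Lemma coef_diag j l : coef j j l = match l with O => 1 | S _ => 0 end.
Proof. unfold coef; now rewrite Nat.compare_refl. Qed.

Lemma coef_gt_0 j k : (j < k)%nat -> coef j k 0 = 0.
Proof. intro Hk; unfold coef; now rewrite (proj2 (Nat.compare_gt_iff _ _) Hk). Qed.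

Lemma coef_gt j k l : (j < k)%nat ->
  coef j k (S l) = INR j / INR (k - j) * binR (k - j) (S l) * binR (k - 1) l.
Proof. intro Hk; unfold coef; now rewrite (proj2 (Nat.compare_gt_iff _ _) Hk). Qed.

Lemma coef_high j k l : (k - j < l)%nat -> coef j k l = 0.
Proof.
  intro Hl. destruct (lt_eq_lt_dec k j) as [[Hk|<-]|Hk].
  - now apply coef_lt.
  - rewrite coef_diag. destruct l; [lia|easy].
  - destruct l as [|l]; [lia|]. rewrite coef_gt, binR_small by lia. ring.
Qed.

Lemma coef_0_l k l : coef 0 (S k) l = 0.
Proof.
  destruct l as [|l].
  - apply coef_gt_0; lia.
  - rewrite coef_gt by lia. simpl INR. unfold Rdiv. ring.
Qed.

Lemma coef_recurrence_gt k n l : (0 < k < n)%nat ->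
  coef k (S n) (S l) - coef (S k) (S n) (S l) =
  coef (k - 1) n (S l) - coef k n (S l) + coef k n l.
Proof.
  intros Hkn. destruct k as [|k]; [lia|].
  assert (exists m, n = S (k + S m)) as [m ->] by (exists (n - k - 2)%nat; lia).
  rewrite Nat.sub_succ, Nat.sub_0_r, !coef_gt by lia.
  replace (S (S (k + S m)) - S k)%nat with (S (S m)) by lia.
  replace (S (S (k + S m)) - S (S k))%nat with (S m) by lia.
  replace (S (k + S m) - k)%nat with (S (S m)) by lia.
  replace (S (k + S m) - S k)%nat with (S m) by lia.
  rewrite !Nat.sub_succ, !Nat.sub_0_r.
  pose proof (pos_INR m); pose proof (pos_INR k).
  destruct l as [|r].
  - rewrite coef_gt_0 by lia. rewrite !binR_0_r, !binR_1_r, !S_INR.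
    field; lra.
  - rewrite coef_gt by lia.
    replace (S (k + S m) - S k)%nat with (S m) by lia.
    rewrite Nat.sub_succ, Nat.sub_0_r.
    rewrite (binR_succ_r (S m) (S r)), (binR_absorb (S m) (S r)), (binR_absorb m r).
    rewrite (binR_absorb (k + S m) r), (binR_succ_r (k + S m) r).
    pose proof (pos_INR r).
    rewrite ?S_INR, ?plus_INR, ?S_INR. field; lra.
Qed.

Lemma coef_recurrence k n l : (1 <= k)%nat ->
  coef k (S n) (S l) - coef (S k) (S n) (S l) =
  coef (k - 1) n (S l) - coef k n (S l) + coef k n l.
Proof.
  intro Hk. destruct (lt_eq_lt_dec n k) as [[Hn|<-]|Hn].
  - rewrite (coef_lt (S k)), !(coef_lt k n) by lia.
    destruct (Nat.eq_dec (S n) k) as [<-|Hn'].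
    + replace (S n - 1)%nat with n by lia. rewrite !coef_diag. ring.
    + rewrite !coef_lt by lia. ring.
  - rewrite !coef_diag, !coef_gt by lia.
    replace (S n - n)%nat with 1%nat by lia.
    replace (n - (n - 1))%nat with 1%nat by lia.
    rewrite minus_INR by lia. simpl (S n - 1)%nat.
    destruct l as [|l].
    + rewrite !binR_0_r, binR_1_r. simpl INR. field.
    + rewrite binR_small by lia. ring.
  - now apply coef_recurrence_gt.
Qed.

Lemma coef_column_sum j i n l : (1 <= j <= S i)%nat -> (n <= i)%nat ->
  sum_n_m (fun k => coef k n l) j i = coef j (S n) (S l) - coef (j - 1) n (S l).
Proof.
  intros Hj Hn.
  set (G k := coef k (S n) (S l) - coef (k - 1) n (S l)).
  rewrite (sum_n_m_ext_loc _ (fun k => minus (G k) (G (S k)))).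
  - rewrite sum_n_m_telescope by lia. unfold G. rewrite Nat.sub_succ, Nat.sub_0_r.
    rewrite (coef_high (S i)), (coef_high i) by lia.
    unfold minus, plus, opp; simpl. ring.
  - intros k Hk. unfold G, minus, plus, opp; simpl. rewrite Nat.sub_0_r.
    pose proof (coef_recurrence k n l ltac:(lia)). lra.
Qed.

(* Coquelicot states many goals at [AbelianMonoid.sort _]; [ring] needs them at [C]. *)
Ltac Cring := match goal with |- @eq _ ?x ?y => change (@eq C x y); ring end.

Lemma RtoC_sum_n_m (f : nat -> R) n m :
  RtoC (sum_n_m f n m) = sum_n_m (fun k => RtoC (f k)) n m.
Proof.
  induction m as [|m IH].
  - destruct n; [now rewrite !sum_n_n|]. now rewrite !sum_n_m_zero by lia.
  - destruct (le_lt_dec n (S m)) as [Hn|Hn].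
    + rewrite !sum_n_Sm, <- IH by lia. apply RtoC_plus.
    + now rewrite !sum_n_m_zero by lia.
Qed.

Definition peval (f : nat -> C) (b : C) (L : nat) : C :=
  sum_n_m (fun l => f l * pow_n b l)%C 0 L.

Lemma peval_ext f g b L :
  (forall l, (l <= L)%nat -> f l = g l) -> peval f b L = peval g b L.
Proof. intro Hfg; apply sum_n_m_ext_loc; intros l Hl; now rewrite Hfg by lia. Qed.

Lemma peval_trunc f b L0 L : (forall l, (L0 < l)%nat -> f l = RtoC 0) ->
  (L0 <= L)%nat -> peval f b L = peval f b L0.
Proof.
  intros Hf HL. unfold peval. rewrite (sum_n_m_Chasles _ 0 L0 L) by lia.
  rewrite (sum_n_m_zero_loc _ (S L0) L).
  - apply plus_zero_r.
  - intros l Hl. rewrite Hf by lia. apply (mult_zero_l (K := C_Ring)).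
Qed.

Lemma peval_plus f g b L :
  (peval f b L + peval g b L)%C = peval (fun l => f l + g l)%C b L.
Proof.
  unfold peval. rewrite <- (sum_n_m_plus (G := C_AbelianMonoid)).
  apply sum_n_m_ext; intro l. change plus with Cplus. Cring.
Qed.

Lemma peval_mult_var f b L :
  (b * peval f b L)%C =
  peval (fun l => match l with O => RtoC 0 | S l' => f l' end) b (S L).
Proof.
  unfold peval. rewrite (sum_Sn_m _ 0 (S L)), <- sum_n_m_S by lia.
  rewrite <- (sum_n_m_mult_l (K := C_Ring)).
  rewrite Cmult_0_l, (plus_zero_l (G := C_AbelianMonoid)).
  apply sum_n_m_ext; intro l. change mult with Cmult.
  change (pow_n b (S l)) with (b * pow_n b l)%C. Cring.
Qed.

Lemma peval_sum (F : nat -> nat -> C) b L n m :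
  sum_n_m (fun k => peval (F k) b L) n m = peval (fun l => sum_n_m (fun k => F k l) n m) b L.
Proof.
  unfold peval. rewrite sum_n_m_swap. apply sum_n_m_ext; intro l.
  apply (sum_n_m_mult_r (K := C_Ring)).
Qed.

Definition vpoly (b : C) (j k : nat) : C := peval (fun l => RtoC (coef j k l)) b k.

Lemma vpoly_peval b j k L : (k <= L)%nat ->
  vpoly b j k = peval (fun l => RtoC (coef j k l)) b L.
Proof.
  intro Hk. symmetry; apply peval_trunc; [|exact Hk].
  intros l Hl. now rewrite coef_high by lia.
Qed.

Lemma vpoly_lt b j k : (k < j)%nat -> vpoly b j k = RtoC 0.
Proof.
  intro Hk. unfold vpoly, peval. apply (sum_n_m_zero_loc (G := C_AbelianMonoid)).
  intros l _. rewrite coef_lt by lia. apply Cmult_0_l.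
Qed.

Lemma vpoly_diag b j : vpoly b j j = RtoC 1.
Proof.
  unfold vpoly. rewrite (peval_trunc _ _ 0).
  2: { intros [|l] Hl; [lia|]. now rewrite coef_diag. }
  2: lia.
  unfold peval. rewrite sum_n_n, coef_diag. change (pow_n b 0) with (RtoC 1). Cring.
Qed.

Lemma vpoly_0_l b k : vpoly b 0 (S k) = RtoC 0.
Proof.
  unfold vpoly, peval. apply (sum_n_m_zero_loc (G := C_AbelianMonoid)).
  intros l _. rewrite coef_0_l. apply Cmult_0_l.
Qed.

Lemma vpoly_gt b j k : (j < k)%nat ->
  vpoly b j k = sum_n_m (fun l =>
    RtoC (INR j / INR (k - j) * binR (k - j) l * binR (k - 1) (l - 1)) * pow_n b l)%C
    1 (k - j).
Proof.
  intro Hjk. unfold vpoly. rewrite (peval_trunc _ _ (k - j)).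
  2: { intros l Hl. now rewrite coef_high. }
  2: lia.
  unfold peval. rewrite sum_Sn_m, coef_gt_0 by lia.
  rewrite Cmult_0_l, (plus_zero_l (G := C_AbelianMonoid)).
  apply sum_n_m_ext_loc. intros [|l] Hl; [lia|].
  rewrite coef_gt by lia. now rewrite Nat.sub_succ, Nat.sub_0_r.
Qed.

Lemma vpoly_recurrence b j n i : (1 <= j <= S i)%nat -> (n <= i)%nat ->
  vpoly b j (S n) = (vpoly b (j - 1) n + b * sum_n_m (fun k => vpoly b k n) j i)%C.
Proof.
  intros Hj Hn.
  rewrite (vpoly_peval b j (S n) (S i)), (vpoly_peval b (j - 1) n (S i)) by lia.
  rewrite (sum_n_m_ext_loc _ (fun k => peval (fun l => RtoC (coef k n l)) b i))
    by (intros; apply vpoly_peval; lia).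
  rewrite peval_sum, peval_mult_var, peval_plus. apply peval_ext. intros [|l] _.
  - destruct j as [|j]; [lia|]. rewrite Nat.sub_succ, Nat.sub_0_r.
    change (coef (S j) (S n) 0) with (coef j n 0). Cring.
  - rewrite <- RtoC_sum_n_m, coef_column_sum, RtoC_minus by lia. Cring.
Qed.

Definition vsol (a b : C) (p : nat -> C) (i j : nat) : C :=
  sum_n_m (fun k => pow_n a k * p (i - k)%nat * vpoly b j k)%C 0 i.

Lemma vsol_recurrence a b p i j : (1 <= j <= S i)%nat ->
  vsol a b p (S i) j =
  (a * (vsol a b p i (j - 1) + b * sum_n_m (fun k => vsol a b p i k) j i))%C.
Proof.
  intros Hj. unfold vsol at 1.
  rewrite (sum_Sn_m _ 0 (S i)), <- sum_n_m_S, vpoly_lt by lia.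
  rewrite Cmult_0_r, (plus_zero_l (G := C_AbelianMonoid)).
  rewrite (sum_n_m_ext_loc _ (fun k =>
      a * (pow_n a k * p (i - k)%nat * vpoly b (j - 1) k)
    + a * b * (pow_n a k * p (i - k)%nat * sum_n_m (fun k' => vpoly b k' k) j i))%C).
  2: { intros k Hk. rewrite (vpoly_recurrence b j k i) by lia.
       change (pow_n a (S k)) with (a * pow_n a k)%C. rewrite Nat.sub_succ. Cring. }
  rewrite (sum_n_m_plus (G := C_AbelianMonoid)), !(sum_n_m_mult_l (K := C_Ring)).
  unfold vsol. rewrite sum_n_m_swap.
  rewrite (sum_n_m_ext (fun k => _ * sum_n_m _ j i)%C
    (fun k => sum_n_m (fun k' => pow_n a k * p (i - k)%nat * vpoly b k' k) j i)%C)
    by (intro k; symmetry; apply (sum_n_m_mult_l (K := C_Ring))).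
  change mult with Cmult. change plus with Cplus.
  now rewrite Cmult_plus_distr_l, Cmult_assoc.
Qed.

Lemma recurrence_solution a b p (v : nat -> nat -> C) :
  v 0%nat 0%nat = p 0%nat ->
  (forall i, v (S i) 0%nat = p (S i)) ->
  (forall i j, (1 <= j <= S i)%nat ->
     v (S i) j = (a * (v i (j - 1)%nat + b * sum_n_m (fun k => v i k) j i))%C) ->
  forall i j, (j <= i)%nat -> v i j = vsol a b p i j.
Proof.
  intros Hv00 Hv0 Hrec i. induction i as [|i IH]; intros j Hj.
  - replace j with 0%nat by lia. unfold vsol. rewrite Hv00, sum_n_n, vpoly_diag.
    change (pow_n a 0) with (RtoC 1). simpl (0 - 0)%nat. Cring.
  - destruct j as [|j].
    + unfold vsol. rewrite Hv0, sum_Sn_m, vpoly_diag by lia.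
      rewrite (sum_n_m_zero_loc _ 1).
      2: { intros [|k] Hk; [lia|]. rewrite vpoly_0_l. apply Cmult_0_r. }
      change (pow_n a 0) with (RtoC 1). rewrite Nat.sub_0_r.
      rewrite (plus_zero_r (G := C_AbelianMonoid)). Cring.
    + rewrite Hrec, vsol_recurrence, IH by lia. do 3 f_equal.
      apply sum_n_m_ext_loc. intros k Hk. apply IH. lia.
Qed.

Lemma vsol_closed_form a b p i j : (j <= i)%nat ->
  vsol a b p i j =
  (pow_n a j * p (i - j)%nat
   + sum_n_m (fun k => pow_n a k * p (i - k)%nat
       * sum_n_m (fun l =>
           RtoC (INR j / INR (k - j) * binR (k - j) l * binR (k - 1) (l - 1))
           * pow_n b l) 1 (k - j))
     (S j) i)%C.
Proof.
  intro Hji. unfold vsol. rewrite (sum_n_m_Chasles _ 0 j i) by lia.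
  change plus with Cplus. f_equal.
  - destruct j as [|j].
    + rewrite sum_n_n, vpoly_diag. Cring.
    + rewrite sum_n_Sm by lia. rewrite vpoly_diag, (sum_n_m_zero_loc _ 0 j).
      * rewrite (plus_zero_l (G := C_AbelianMonoid)). Cring.
      * intros k Hk. rewrite vpoly_lt by lia. apply Cmult_0_r.
  - apply sum_n_m_ext_loc. intros k Hk. now rewrite vpoly_gt by lia.
Qed.

Theorem theorem3 (c : nat) (l1 l2 m1 m2 : R) (alpha : C)
  (pi : state -> C) (v : nat -> nat -> C) :
  (1 <= c)%nat -> 0 < l1 -> 0 < l2 -> 0 < m1 -> 0 < m2 -> 0 < Re alpha ->
  (* pi_x(alpha) = int_0^oo e^{-alpha t} p_x(t) dt *)
  (forall x : state,
     is_RInt_gen (fun t => (Cexp (- (alpha * RtoC t)) * RtoC (trans_prob c l1 l2 m1 m2 x t))%C)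
       (at_point 0) (Rbar_locally p_infty) (pi x)) ->
  v 0%nat 0%nat = pi (0%nat, (c - 1)%nat) ->
  (forall i : nat, v (S i) 0%nat = pi (S i, (c - 1)%nat)) ->
  (forall i j : nat, (1 <= j <= S i)%nat ->
     v (S i) j = (RR1 c l1 l2 m2 alpha
                  * (v i (j - 1)%nat + RR2 c l1 l2 m2 alpha * sum_n_m (fun k => v i k) j i))%C) ->
  forall i j : nat, (j <= i)%nat ->
    v i j =
      (pow_n (RR1 c l1 l2 m2 alpha) j * pi ((i - j)%nat, (c - 1)%nat)
       + sum_n_m (fun k =>
           pow_n (RR1 c l1 l2 m2 alpha) k * pi ((i - k)%nat, (c - 1)%nat)
           * sum_n_m (fun l =>
               RtoC (INR j / INR (k - j) * binR (k - j) l * binR (k - 1) (l - 1))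
               * pow_n (RR2 c l1 l2 m2 alpha) l) 1 (k - j))
         (S j) i)%C.
Proof.
  (* The identity holds for arbitrary [pi], [RR1] and [RR2]; only the recursion is used. *)
  intros _ _ _ _ _ _ _ Hv00 Hv0 Hrec i j Hji.
  rewrite (recurrence_solution _ _ (fun m => pi (m, (c - 1)%nat)) v Hv00 Hv0 Hrec i j Hji).
  now apply vsol_closed_form.
Qed.
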